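(* The exponential generating function $f(x,y)=f(x,y;p,q)=\sum_{n\ge1}a_n(y;p,q)\frac{x^n}{n!}$ satisfies $$\frac{\partial}{\partial x}f(x,y)=ypq^2+\frac{ypq}{1-yp}\bigl(f(x,1)-f(x,yp)\bigr)+\frac{ypq^2}{1-ypq}\bigl(f(x,yp)-ypq\,f(xypq,1/q)\bigr).$$
   Context: An inversion sequence of length $n$ is a sequence $\rho=\rho_1\cdots\rho_n$ of integers with $1\le \rho_i\le i$ for all $i$. Let $I_{n,i}$ be the set of inversion sequences of length $n$ with last letter $i$. Represent $\rho$ as a bargraph whose $i$-th column has $\rho_i$ unit cells. Let $\mathrm{area}(\rho)=\rho_1+\cdots+\rho_n$ and let $\mathrm{sper}(\rho)$ be half the perimeter of the bargraph (bottom boundary included), i.e. $\mathrm{sper}(\rho)=n+\rho_1+\sum_{i=1}^{n-1}\max(\rho_{i+1}-\rho_i,0)$. Define $a_{n,i}(p,q)=\sum_{\rho\in I_{n,i}}p^{\mathrm{area}(\rho)}q^{\mathrm{sper}(\rho)}$ and $a_n(y;p,q)=\sum_{i=1}^n a_{n,i}(p,q)y^i$. *)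

From HB Require Import structures.
From mathcomp Require Import all_boot all_order all_algebra.
Set Implicit Arguments. Unset Strict Implicit. Unset Printing Implicit Defensive.
Import Order.TTheory GRing.Theory Num.Theory.
Local Open Scope ring_scope.

(* Inversion sequences are represented as seq nat; rho_i = nth 0 s (i-1). *)
Definition is_inv_seq (n : nat) (s : seq nat) : bool :=
  (size s == n) && [forall i : 'I_n, (1 <= nth 0 s i <= i.+1)%N].

Definition area (s : seq nat) : nat := sumn s.

(* sper(rho) = n + rho_1 + sum_{i=1}^{n-1} max(rho_{i+1} - rho_i, 0)
   (truncated nat subtraction realizes max(.,0)) *)
Definition sper (s : seq nat) : nat :=
  (size s + head 0 s + \sum_(i < (size s).-1) (nth 0 s i.+1 - nth 0 s i))%N.

(* All inversion sequences of length n are among the n-tuples with entries in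
   {0,...,n}; distinct tuples give distinct sequences. *)
Definition a_ni {R : fieldType} (n i : nat) (p q : R) : R :=
  \sum_(t : n.-tuple 'I_n.+1 |
          is_inv_seq n (map val t) && (last 0%N (map val t) == i))
     p ^+ area (map val t) * q ^+ sper (map val t).

Definition a_n {R : fieldType} (n : nat) (y p q : R) : R :=
  \sum_(1 <= i < n.+1) a_ni n i p q * y ^+ i.

Definition fps (R : fieldType) := nat -> R.

Definition egf {R : fieldType} (y p q : R) : fps R :=
  fun n => if n is 0 then 0 else a_n n y p q / (n`!)%:R.

Definition fps_deriv {R : fieldType} (F : fps R) : fps R :=
  fun n => F n.+1 * (n.+1)%:R.

Definition fps_scalex {R : fieldType} (c : R) (F : fps R) : fps R :=
  fun n => c ^+ n * F n.

Definition fps_const {R : fieldType} (c : R) : fps R :=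
  fun n => if n is 0 then c else 0.

Definition fps_add {R : fieldType} (F G : fps R) : fps R := fun n => F n + G n.
Definition fps_sub {R : fieldType} (F G : fps R) : fps R := fun n => F n - G n.
Definition fps_scal {R : fieldType} (c : R) (F : fps R) : fps R := fun n => c * F n.

(* An inversion sequence of length n+1 is one of length n followed by a letter
   1 <= j <= n+1, and appending j multiplies p^area q^sper by
   p^j q^(1 + max(j - l, 0)), where l is the previous last letter.  So for
   A_n(y) = sum_s p^area(s) q^sper(s) y^(last s), the sum over j splits at
   j = l into two geometric sums:
     A_(n+1)(y) = ypq/(1-yp) (A_n(1) - A_n(yp))
                  + ypq^2/(1-ypq) (A_n(yp) - (ypq)^(n+1) A_n(1/q)).
   Divided by n! this is the coefficient of x^n in the differential equation;
   the factor (ypq)^(n+1) is where f(xypq, 1/q) comes from. *)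
From HB Require Import structures.
From mathcomp Require Import all_boot all_order all_algebra.
From mathcomp Require Import zify ring.
From Stdlib Require Import FunctionalExtensionality.
Import Order.TTheory GRing.Theory Num.Theory.
Local Open Scope ring_scope.

Fixpoint inv_seqs (n : nat) : seq (seq nat) :=
  if n is m.+1 then [seq rcons s j | s <- inv_seqs m, j <- iota 1 m.+1]
  else [:: [::]].

Lemma is_inv_seq_rcons n s j :
  is_inv_seq n.+1 (rcons s j) = is_inv_seq n s && (1 <= j <= n.+1)%N.
Proof.
rewrite /is_inv_seq size_rcons eqSS.
have [<-|] //= := eqVneq (size s) n.
apply/forallP/andP => [H | [/forallP H Hj] i].
- split; last by have := H ord_max; rewrite /= nth_rcons ltnn eqxx.
  apply/forallP => i; have := H (widen_ord (leqnSn _) i).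
  by rewrite /= nth_rcons ltn_ord.
- rewrite nth_rcons; case: (ltnP i (size s)) => [Hi | Hi] /=.
    exact: (H (Ordinal Hi)).
  have -> : (i : nat) = size s by apply/eqP; rewrite eqn_leq Hi andbT -ltnS.
  by rewrite eqxx.
Qed.

Lemma mem_inv_seqs n s : (s \in inv_seqs n) = is_inv_seq n s.
Proof.
elim: n s => [|n IH] s.
  by rewrite inE /is_inv_seq; case: s => //=; apply/esym/forallP => -[].
case/lastP: s => [|s j].
  by apply/negbTE/allpairsP => -[[[|x s'] j] [_ _]].
rewrite is_inv_seq_rcons -IH; apply/allpairsP/andP => [[[s' j'] []] | [Hs Hj]].
- move=> /= Hs + /rcons_inj[-> ->]; rewrite inE mem_iota => Hj.
  by split=> //; lia.
- by exists (s, j); split=> //; rewrite [_.2]/= mem_iota; lia.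
Qed.

Lemma uniq_inv_seqs n : uniq (inv_seqs n).
Proof.
elim: n => // n IH; apply: allpairs_uniq => //; first exact: iota_uniq.
by move=> [s j] [s' j'] _ _ /= /rcons_inj.
Qed.

Lemma inv_seq_nth_le n s i : is_inv_seq n s -> (nth 0 s i <= n)%N.
Proof.
case/andP => /eqP Hsz /forallP H; case: (ltnP i n) => [Hi | Hi].
  by case/andP: (H (Ordinal Hi)) => _ /leq_trans; apply.
by rewrite nth_default // Hsz.
Qed.

Lemma last_inv_seq_le n s : is_inv_seq n s -> (last 0 s <= n)%N.
Proof. by move=> Hs; rewrite -nth_last; apply: inv_seq_nth_le Hs. Qed.

Lemma last_inv_seq_gt0 n s : is_inv_seq n.+1 s -> (0 < last 0 s)%N.
Proof.
case/andP => /eqP Hsz /forallP /(_ ord_max).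
by rewrite -nth_last Hsz => /andP[].
Qed.

Lemma perm_inv_seqs_tuples n :
  perm_eq (inv_seqs n)
    [seq map val t | t : n.-tuple 'I_n.+1 <- index_enum (n.-tuple 'I_n.+1)
                   & is_inv_seq n (map val t)].
Proof.
apply: uniq_perm; first exact: uniq_inv_seqs.
  rewrite map_inj_in_uniq ?filter_uniq ?index_enum_uniq //.
  by move=> t1 t2 _ _ /(inj_map val_inj) /val_inj.
move=> s; rewrite mem_inv_seqs; apply/idP/mapP => [Hs | [t]]; last first.
  by rewrite mem_filter => /andP[+ _] ->.
have sz : size (map (@inord n) s) == n by rewrite size_map; case/andP: Hs.
have Es : map val (Tuple sz) = s.
  rewrite /= -map_comp map_id_in // => k /(nthP 0)[i _ <-] /=.
  by apply: inordK; rewrite ltnS (inv_seq_nth_le _ _ _ Hs).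
by exists (Tuple sz); rewrite ?mem_filter ?mem_index_enum Es ?andbT.
Qed.

Lemma big_inv_tuples (V : nmodType) n (P : pred (seq nat)) (F : seq nat -> V) :
  \sum_(t : n.-tuple 'I_n.+1 | is_inv_seq n (map val t) && P (map val t))
     F (map val t)
  = \sum_(s <- inv_seqs n | P s) F s.
Proof.
by rewrite (perm_big _ (perm_inv_seqs_tuples n)) big_map big_filter_cond.
Qed.

Lemma area_rcons s j : area (rcons s j) = (area s + j)%N.
Proof. exact: sumn_rcons. Qed.

Lemma sper_rcons s j : sper (rcons s j) = (sper s + 1 + (j - last 0 s))%N.
Proof.
case: s => [|x s]; first by rewrite /sper /= !big_ord0; lia.
rewrite /sper size_rcons /= big_ord_recr /= nth_rcons ltnn eqxx.
have -> : nth 0 (x :: rcons s j) (size s) = last x s.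
  rewrite -rcons_cons nth_rcons /= ltnSn.
  by rewrite -[size s]/((size (x :: s)).-1) nth_last.
rewrite (eq_bigr (fun i : 'I_(size s) => nth 0 s i - nth 0 (x :: s) i)%N).
  by lia.
by move=> i _; rewrite -rcons_cons !nth_rcons /= ltn_ord ltnS ltnW.
Qed.

Section GeometricSums.
Variable R : fieldType.

Lemma sum_geom (x : R) m : 1 - x != 0 ->
  \sum_(1 <= j < m.+1) x ^+ j = x * (1 - x ^+ m) / (1 - x).
Proof.
move=> hx; elim: m => [|m IH]; first by rewrite big_geq // subrr mulr0 mul0r.
by rewrite big_nat_recr //= IH exprS; field.
Qed.

Lemma sum_geom_truncated (x r : R) i m : (i <= m)%N ->
  1 - x != 0 -> 1 - x * r != 0 -> r != 0 ->
  \sum_(1 <= j < m.+1) x ^+ j * r ^+ (1 + (j - i)) =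
  x * r / (1 - x) * (1 - x ^+ i)
  + x * r ^+ 2 / (1 - x * r) * (x ^+ i - (x * r) ^+ m * r^-1 ^+ i).
Proof.
move=> /subnKC Em hx hxr hr; rewrite -{}Em; move: (m - i)%N => k.
rewrite (@big_cat_nat _ _ _ i.+1) ?leq_addr //=.
have low : \sum_(1 <= j < i.+1) x ^+ j * r ^+ (1 + (j - i)) =
           r * \sum_(1 <= j < i.+1) x ^+ j.
  rewrite mulr_sumr big_nat_cond [RHS]big_nat_cond; apply: eq_bigr => j.
  by rewrite ltnS andbT => /andP[_ /eqP ->]; rewrite addn0 mulrC.
have high : \sum_(i.+1 <= j < (i + k).+1) x ^+ j * r ^+ (1 + (j - i)) =
            x ^+ i * r * \sum_(1 <= j < k.+1) (x * r) ^+ j.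
  rewrite -addn1 addnC -addSn big_addn addSn -addnS addKn mulr_sumr.
  by apply: eq_bigr => j _; rewrite addnK exprD exprMn addnC exprD; ring.
have hri : r ^+ i != 0 by rewrite expf_neq0.
rewrite low high !sum_geom // exprVn !exprMn !exprD; field.
by rewrite hx hxr hri.
Qed.

End GeometricSums.

Section InversionSequenceGF.
Context {R : fieldType} (p q : R).

Definition bargraph_weight (s : seq nat) : R := p ^+ area s * q ^+ sper s.

Definition inv_gf (n : nat) (y : R) : R :=
  \sum_(s <- inv_seqs n) bargraph_weight s * y ^+ last 0 s.

Lemma a_n_inv_gf n y : (0 < n)%N -> a_n n y p q = inv_gf n y.
Proof.
move=> n_gt0; rewrite /a_n /a_ni.
under eq_bigr => i _ do
  rewrite (big_inv_tuples _ n (fun s => last 0 s == i) bargraph_weight) big_distrl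
          big_mkcond /=.
rewrite exchange_big /inv_gf [LHS]big_seq [RHS]big_seq; apply: eq_bigr => s.
rewrite mem_inv_seqs => Hs.
have l_ge1 : (0 < last 0 s)%N.
  by case: n n_gt0 Hs => // n _; apply: last_inv_seq_gt0.
have l_in : last 0 s \in index_iota 1 n.+1.
  by rewrite mem_index_iota l_ge1 ltnS (last_inv_seq_le _ _ Hs).
rewrite (bigD1_seq _ l_in (iota_uniq _ _)) /= eqxx big1 ?addr0 // => i.
by rewrite eq_sym => /negbTE ->.
Qed.

Lemma inv_gfS n y :
  inv_gf n.+1 y = \sum_(s <- inv_seqs n) bargraph_weight s *
    \sum_(1 <= j < n.+2) (y * p) ^+ j * q ^+ (1 + (j - last 0 s)).
Proof.
rewrite /inv_gf big_allpairs_dep; apply: eq_bigr => s _.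
rewrite big_distrr; apply: eq_bigr => j _.
rewrite /bargraph_weight area_rcons sper_rcons last_rcons /=.
by move: (area s) (sper s) => a b; rewrite !exprD exprMn; ring.
Qed.

Lemma inv_gf1 y : inv_gf 1 y = y * p * q ^+ 2.
Proof.
by rewrite inv_gfS /inv_gf !big_seq1 /bargraph_weight /sper big_ord0 /=; ring.
Qed.

Lemma inv_gf_recurrence n y : q != 0 -> 1 - y * p != 0 -> 1 - y * p * q != 0 ->
  inv_gf n.+1 y =
  y * p * q / (1 - y * p) * (inv_gf n 1 - inv_gf n (y * p))
  + y * p * q ^+ 2 / (1 - y * p * q)
    * (inv_gf n (y * p) - (y * p * q) ^+ n.+1 * inv_gf n q^-1).
Proof.
move=> hq h1 h2; rewrite inv_gfS /inv_gf !mulr_sumr -!sumrB !mulr_sumr -big_split.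
rewrite big_seq [RHS]big_seq; apply: eq_bigr => s; rewrite mem_inv_seqs => Hs.
rewrite sum_geom_truncated ?expr1n 1?leqW ?(last_inv_seq_le _ _ Hs) // /=; ring.
Qed.

End InversionSequenceGF.

Lemma egfS (R : fieldType) (y p q : R) n :
  egf y p q n.+1 = inv_gf p q n.+1 y / (n.+1)`!%:R.
Proof. by rewrite /egf a_n_inv_gf. Qed.

Theorem theorem2p2 (R : fieldType) (char0 : [pchar R] =i pred0)
  (y p q : R) (hq : q != 0) (h1 : 1 - y * p != 0) (h2 : 1 - y * p * q != 0) :
  fps_deriv (egf y p q) =
  fps_add (fps_const (y * p * q ^+ 2))
    (fps_add
      (fps_scal (y * p * q / (1 - y * p))
         (fps_sub (egf 1 p q) (egf (y * p) p q)))
      (fps_scal (y * p * q ^+ 2 / (1 - y * p * q))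
         (fps_sub (egf (y * p) p q)
            (fps_scal (y * p * q) (fps_scalex (y * p * q) (egf q^-1 p q)))))).
Proof.
have nat_neq0 k : (k.+1)%:R != 0 :> R by rewrite ((pcharf0P R).1 char0).
have fact_neq0 k : (k`!)%:R != 0 :> R by rewrite -(prednK (fact_gt0 k)).
apply: functional_extensionality => n.
rewrite /fps_deriv /fps_add /fps_const /fps_scal /fps_sub /fps_scalex.
case: n => [|n]; rewrite !egfS /=.
  by rewrite inv_gf1 divr1 !mulr1 !mulr0 !subrr !mulr0 !addr0.
rewrite inv_gf_recurrence // factS natrM [_ ^+ n.+2]exprS.
by field; rewrite fact_neq0 h1 h2 -(natrD _ 2) nat_neq0.
Qed.
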